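(* Let $P:\mathbf{R}^{24}\to\mathbf{R}$, $P(X,Y,Z)=\mathrm{Re}((oX\cdot oY)\cdot oZ)$, let $H\subset\mathbf{R}^{24}$ be a 21-dimensional linear subspace and $S^{20}_1$ its unit sphere. Let $\delta\in[1,2)$, $a,\bar b\in S^{20}_1$, $W=P(a)$, $\bar W=P(\bar b)$, and let $$\mu_1(\delta)=\tfrac{2}{\sqrt3}\cos\Big(\tfrac{\arccos(3\sqrt3W)-\pi}{3}\Big)-W\delta,\quad \mu_2(\delta)=\tfrac{2}{\sqrt3}\cos\Big(\tfrac{\arccos(3\sqrt3W)+\pi}{3}\Big)-W\delta,$$ $$\mu_3(\delta)=-\tfrac{2}{\sqrt3}\cos\Big(\tfrac{\arccos(3\sqrt3W)}{3}\Big)-W\delta,$$ which satisfy $\mu_1(\delta)\ge\mu_2(\delta)\ge\mu_3(\delta)$ and are the roots of $T^3+3W\delta T^2+(3W^2\delta^2-1)T+W(2-\delta)+W^3\delta^3$ (i.e. of $Q(T+\delta W)$ where $Q(T)=T^3-T+2W$); define $\bar\mu_1(\delta)\ge\bar\mu_2(\delta)\ge\bar\mu_3(\delta)$ by the same formulas with $W$ replaced by $\bar W$. For $K>0$ put $$\mu_-(K)=\min_{i=1,2,3}\big(\mu_i(\delta)-K\bar\mu_i(\delta)\big),\qquad \mu_+(K)=\max_{i=1,2,3}\big(\mu_i(\delta)-K\bar\mu_i(\delta)\big).$$ Then for every $K>0$ with $|K-1|+|\bar W-W|\neq0$, $$\frac{2-\delta}{4+\delta}\le\frac{\mu_+(K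)}{-\mu_-(K)}\le\frac{4+\delta}{2-\delta}.$$
   Context: $\mathcal{O}$ denotes the algebra of Cayley octonions: the 8-dimensional real algebra with basis $1,e_1,\dots,e_7$, where $1$ is the unit, $e_i^2=-1$, $e_ie_j=-e_je_i$ for $i\neq j$, and for every $i$ (indices mod 7) $e_ie_{i+1}=e_{i+3}$, $e_{i+1}e_{i+3}=e_i$, $e_{i+3}e_i=e_{i+1}$. For $t\in\mathbf{R}^8$, $ot=t_0+t_1e_1+\dots+t_7e_7$; $\mathrm{Re}$ is the coefficient of $1$; $\mathbf{R}^{24}=(\mathbf{R}^8)^3$. On the unit sphere of $\mathbf{R}^{24}$ one has $|P|\le 1/(3\sqrt3)$. *)

From mathcomp Require Import all_boot all_order all_algebra.
From mathcomp Require Import all_classical all_reals all_analysis.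
Set Implicit Arguments. Unset Strict Implicit. Unset Printing Implicit Defensive.
Import Order.TTheory GRing.Theory Num.Theory.
Local Open Scope ring_scope.

Section Oct.
Variable R : realType.

(* Fano lines (0-based, mod 7): {s, s+1, s+3}; with e_(i+1) = basis index i+1.
   e_a e_b = e_c when (a,b,c) is a cyclic rotation of (s, s+1, s+3). *)
Definition cyc_match (s a b c : nat) : bool :=
  let x := (s %% 7)%N in let y := (s.+1 %% 7)%N in let z := ((s + 3) %% 7)%N in
  [|| (a, b, c) == (x, y, z), (a, b, c) == (y, z, x) | (a, b, c) == (z, x, y)].

Definition fano_coef (a b c : nat) : R :=
  \sum_(s < 7) ((cyc_match s a b c)%:R - (cyc_match s b a c)%:R).

(* structure constants: e_i e_j = sum_k oct_coef i j k e_k, e_0 = 1 *)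
Definition oct_coef (i j k : 'I_8) : R :=
  if i == 0 :> nat then (j == k)%:R
  else if j == 0 :> nat then (i == k)%:R
  else if i == j then - (k == 0 :> nat)%:R
  else if k == 0 :> nat then 0
  else fano_coef i.-1 j.-1 k.-1.

Definition omul (x y : 'rV[R]_8) : 'rV[R]_8 :=
  \row_k \sum_(i < 8) \sum_(j < 8) x 0 i * y 0 j * oct_coef i j k.

Definition ore (x : 'rV[R]_8) : R := x 0 0.

Definition blk (v : 'rV[R]_24) (m : nat) : 'rV[R]_8 :=
  \row_(i < 8) v 0 (inord (8 * m + i)%N).

Definition P (v : 'rV[R]_24) : R :=
  ore (omul (omul (blk v 0) (blk v 1)) (blk v 2)).

Definition sqnorm n (v : 'rV[R]_n) : R := \sum_(i < n) v 0 i ^+ 2.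

Definition mu1 (W d : R) : R :=
  2 / Num.sqrt 3 * cos ((acos (3 * Num.sqrt 3 * W) - pi) / 3) - W * d.
Definition mu2 (W d : R) : R :=
  2 / Num.sqrt 3 * cos ((acos (3 * Num.sqrt 3 * W) + pi) / 3) - W * d.
Definition mu3 (W d : R) : R :=
  - (2 / Num.sqrt 3) * cos (acos (3 * Num.sqrt 3 * W) / 3) - W * d.

Definition mu_minus (W Wb d K : R) : R :=
  Num.min (mu1 W d - K * mu1 Wb d)
    (Num.min (mu2 W d - K * mu2 Wb d) (mu3 W d - K * mu3 Wb d)).
Definition mu_plus (W Wb d K : R) : R :=
  Num.max (mu1 W d - K * mu1 Wb d)
    (Num.max (mu2 W d - K * mu2 Wb d) (mu3 W d - K * mu3 Wb d)).
End Oct.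

(* Write W = P a and W' = P b.  The octonion norm is multiplicative and P is the real part of a
   triple product, so AM-GM on the three block norms gives 27 W^2 <= 1 on the unit sphere of
   R^24.  Hence the trigonometric formulas are the three real
   roots x_i of T^3 - T + 2W, and y_i those of T^3 - T + 2W', both triples summing to 0.  With
   B_i := x_i - K y_i and e := W - K W' one has mu_i(d) - K mubar_i(d) = B_i - d e and
   B_i - 2e = x_i^3 - K y_i^3.  Comparing x_i with K^(1/3) y_i shows that B_i - 2e takes both
   signs; since the B_i sum to 0 and are not all 0 (else K = 1 and W = W'), the maximum M and
   minimum m of the B_i satisfy m < 0, M <= -2m, -m <= 2M and m <= 2e <= M, which give the
   two bounds on (M - d e) / (d e - m). *)
From mathcomp Require Import all_boot all_order all_algebra.
From mathcomp Require Import all_classical all_reals all_analysis.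
From mathcomp Require Import ring lra zify.
Set Implicit Arguments. Unset Strict Implicit. Unset Printing Implicit Defensive.
Import Order.TTheory GRing.Theory Num.Theory.
Local Open Scope ring_scope.

(* Integer-valued copies of [fano_coef] and [oct_coef], which can be evaluated by
   computation. *)
Definition fano_coefz (a b c : nat) : int :=
  (count (fun s => cyc_match s a b c) (iota 0 7))%:Z
  - (count (fun s => cyc_match s b a c) (iota 0 7))%:Z.

Definition oct_coefz (i j k : nat) : int :=
  if i == 0%N then (j == k)%:Z
  else if j == 0%N then (i == k)%:Z
  else if i == j then - (k == 0%N)%:Z
  else if k == 0%N then 0
  else fano_coefz i.-1 j.-1 k.-1.

Arguments oct_coefz : simpl never.

Ltac eval_oct_coefz :=
  repeat match goal with |- context [oct_coefz ?i ?j ?k] =>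
    let v := eval vm_compute in (oct_coefz i j k) in change (oct_coefz i j k) with v end.

Section RealField.
Variable R : realFieldType.

Lemma AGM3 (x y z : R) : 0 <= x -> 0 <= y -> 0 <= z -> 27 * (x * y * z) <= (x + y + z) ^+ 3.
Proof.
move=> x_ge0 y_ge0 z_ge0; rewrite -subr_ge0.
have -> : (x + y + z) ^+ 3 - 27 * (x * y * z) =
  (x + y + z) * ((x - y) ^+ 2 + (y - z) ^+ 2 + (z - x) ^+ 2) / 2
  + 3 * (x * (y - z) ^+ 2 + y * (z - x) ^+ 2 + z * (x - y) ^+ 2) by field.
have := sqr_ge0 (x - y); have := sqr_ge0 (y - z); have := sqr_ge0 (z - x); nra.
Qed.

Lemma lt_of_cube_lt (x y : R) : x ^+ 3 < y ^+ 3 -> x < y.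
Proof.
apply: contraTT; rewrite -!leNgt => le_yx; rewrite -subr_ge0.
have -> : x ^+ 3 - y ^+ 3 = (x - y) * ((x + y / 2) ^+ 2 + 3 / 4 * y ^+ 2) by field.
by apply: mulr_ge0; [lra | apply: addr_ge0; [|apply: mulr_ge0]; rewrite ?sqr_ge0].
Qed.

Lemma cubic_root_diff (K W V x y : R) :
  x ^+ 3 - x + 2 * W = 0 -> y ^+ 3 - y + 2 * V = 0 ->
  (x - K * y) - 2 * (W - K * V) = x ^+ 3 - K * y ^+ 3.
Proof.
move=> x_root y_root.
have -> : x ^+ 3 - K * y ^+ 3 = (x - K * y) - 2 * (W - K * V)
  + (x ^+ 3 - x + 2 * W) - K * (y ^+ 3 - y + 2 * V) by ring.
by rewrite x_root y_root mulr0 addr0 subr0.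
Qed.

Lemma root_diff_ge (K W V x y : R) :
  x ^+ 3 - x + 2 * W = 0 -> y ^+ 3 - y + 2 * V = 0 ->
  (2 * (W - K * V) <= x - K * y) = (K * y ^+ 3 <= x ^+ 3).
Proof. by move=> x_root y_root; rewrite -subr_ge0 cubic_root_diff // subr_ge0. Qed.

Lemma root_diff_le (K W V x y : R) :
  x ^+ 3 - x + 2 * W = 0 -> y ^+ 3 - y + 2 * V = 0 ->
  (x - K * y <= 2 * (W - K * V)) = (x ^+ 3 <= K * y ^+ 3).
Proof. by move=> x_root y_root; rewrite -subr_le0 cubic_root_diff // subr_le0. Qed.

Lemma cubic_roots_scale (K W V x1 x3 y1 y3 : R) : 0 < K -> y1 != y3 ->
  x1 ^+ 3 - x1 + 2 * W = 0 -> x3 ^+ 3 - x3 + 2 * W = 0 ->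
  y1 ^+ 3 - y1 + 2 * V = 0 -> y3 ^+ 3 - y3 + 2 * V = 0 ->
  x1 = K * y1 -> x3 = K * y3 -> K = 1 /\ W = V.
Proof.
move=> K_gt0 y13 + + y1_root y3_root x1E x3E; rewrite x1E x3E => x1_root x3_root.
have lin y : (K * y) ^+ 3 - K * y + 2 * W = 0 -> y ^+ 3 - y + 2 * V = 0 ->
    (K ^+ 3 - K) * y + 2 * (W - K ^+ 3 * V) = 0.
  move=> Ky_root y_root.
  have -> : (K ^+ 3 - K) * y + 2 * (W - K ^+ 3 * V) =
    ((K * y) ^+ 3 - K * y + 2 * W) - K ^+ 3 * (y ^+ 3 - y + 2 * V) by ring.
  by rewrite Ky_root y_root mulr0 subr0.
have l1 := lin _ x1_root y1_root; have l3 := lin _ x3_root y3_root.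
have : (K * (K - 1) * (K + 1)) * (y1 - y3) = 0.
  have -> : (K * (K - 1) * (K + 1)) * (y1 - y3) =
    ((K ^+ 3 - K) * y1 + 2 * (W - K ^+ 3 * V)) - ((K ^+ 3 - K) * y3 + 2 * (W - K ^+ 3 * V))
    by ring.
  by rewrite l1 l3 subrr.
move/eqP; rewrite mulf_eq0 (subr_eq0 y1 y3) (negPf y13) orbF !mulf_eq0 (gt_eqF K_gt0) /=.
move=> /orP[/eqP K1|/eqP]; last by lra.
have {K1} K1 : K = 1 by lra.
subst K; split => //; move: l1; rewrite expr1n subrr mul0r add0r mul1r; lra.
Qed.

Lemma max3_min3_sum0 (B1 B2 B3 : R) :
  B1 + B2 + B3 = 0 -> ~ [/\ B1 = 0, B2 = 0 & B3 = 0] ->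
  [/\ Num.max B1 (Num.max B2 B3) <= - (2 * Num.min B1 (Num.min B2 B3)),
      - Num.min B1 (Num.min B2 B3) <= 2 * Num.max B1 (Num.max B2 B3)
    & Num.min B1 (Num.min B2 B3) < 0].
Proof.
move=> sum0 not0; set M := Num.max _ _; set m := Num.min _ _.
have [M1 M2 M3] : [/\ B1 <= M, B2 <= M & B3 <= M] by rewrite !le_max !lexx !orbT.
have [m1 m2 m3] : [/\ m <= B1, m <= B2 & m <= B3] by rewrite !ge_min !lexx !orbT.
have MB : M = B1 \/ M = B2 \/ M = B3.
  by rewrite /M !maxEle; case: (leP B2 B3) => _; case: ifP => _; tauto.
have mB : m = B1 \/ m = B2 \/ m = B3.
  by rewrite /m !minEle; case: (leP B2 B3) => _; case: ifP => _; tauto.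
split; first by case: MB => [|[|]] ->; lra.
  by case: mB => [|[|]] ->; lra.
rewrite ltNge; apply/negP => m_ge0; apply: not0; split; lra.
Qed.

Lemma ratio_bounds (d e M m : R) : 1 <= d < 2 ->
  2 * e <= M -> m <= 2 * e -> M <= - (2 * m) -> - m <= 2 * M -> m < 0 ->
  (2 - d) / (4 + d) <= (M - d * e) / - (m - d * e) <= (4 + d) / (2 - d).
Proof.
move=> /andP[d_ge1 d_lt2] eM me Mm mM m_lt0.
have den_gt0 : 0 < - (m - d * e).
  have [e_lt0|e_ge0] := ltP e 0.
    have : 0 < (2 - d) * - e by apply: mulr_gt0; lra.
    lra.
  have : 0 <= d * e by apply: mulr_ge0; lra.
  lra.
have d4_gt0 : 0 < 4 + d by lra.
have d2_gt0 : 0 < 2 - d by lra.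
(* Cleared of denominators, each bound is p + 3 q for the products p, q >= 0 given to nra. *)
apply/andP; split.
  rewrite ler_pdivlMr // mulrAC ler_pdivrMr //.
  have : 0 <= (2 - d) * (2 * M + m) by apply: mulr_ge0; lra.
  have : 0 <= d * (M - 2 * e) by apply: mulr_ge0; lra.
  nra.
rewrite ler_pdivrMr // mulrAC ler_pdivlMr //.
have : 0 <= (2 - d) * (- (2 * m) - M) by apply: mulr_ge0; lra.
have : 0 <= d * (2 * e - m) by apply: mulr_ge0; lra.
nra.
Qed.

End RealField.

Section Real.
Variable R : realType.

Lemma exists_cube_root (K : R) : 0 < K -> exists k : R, k ^+ 3 = K.
Proof.
move=> K_gt0; exists (K `^ 3^-1).
rewrite -powR_mulrn ?powR_ge0 // -powRrM mulVf ?powRr1 ?ltW // pnatr_eq0.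
Qed.

Lemma exists_cube_ge (K x1 x2 x3 y1 y2 y3 : R) : 0 < K ->
  x1 + x2 + x3 = 0 -> y1 + y2 + y3 = 0 ->
  [|| K * y1 ^+ 3 <= x1 ^+ 3, K * y2 ^+ 3 <= x2 ^+ 3 | K * y3 ^+ 3 <= x3 ^+ 3].
Proof.
move=> /exists_cube_root[k <-] x_sum0 y_sum0; rewrite -!exprMn.
apply: contraT; rewrite !negb_or -!ltNge.
move=> /and3P[/lt_of_cube_lt lt1 /lt_of_cube_lt lt2 /lt_of_cube_lt lt3].
have : k * y1 + k * y2 + k * y3 = 0 by rewrite -!mulrDr y_sum0 mulr0.
lra.
Qed.

Lemma exists_cube_le (K x1 x2 x3 y1 y2 y3 : R) : 0 < K ->
  x1 + x2 + x3 = 0 -> y1 + y2 + y3 = 0 ->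
  [|| x1 ^+ 3 <= K * y1 ^+ 3, x2 ^+ 3 <= K * y2 ^+ 3 | x3 ^+ 3 <= K * y3 ^+ 3].
Proof.
move=> K_gt0 x_sum0 y_sum0.
have cubeN (z : R) : (- z) ^+ 3 = - z ^+ 3 by ring.
have := @exists_cube_ge K (- x1) (- x2) (- x3) (- y1) (- y2) (- y3) K_gt0.
by rewrite !cubeN !mulrN !lerN2; apply; lra.
Qed.

Lemma roots_ratio_bounds (d K W V x1 x2 x3 y1 y2 y3 : R) :
  1 <= d < 2 -> 0 < K -> `|K - 1| + `|V - W| != 0 ->
  x1 + x2 + x3 = 0 -> y1 + y2 + y3 = 0 -> y1 != y3 ->
  x1 ^+ 3 - x1 + 2 * W = 0 -> x2 ^+ 3 - x2 + 2 * W = 0 -> x3 ^+ 3 - x3 + 2 * W = 0 ->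
  y1 ^+ 3 - y1 + 2 * V = 0 -> y2 ^+ 3 - y2 + 2 * V = 0 -> y3 ^+ 3 - y3 + 2 * V = 0 ->
  (2 - d) / (4 + d) <=
    Num.max (x1 - K * y1 - d * (W - K * V))
      (Num.max (x2 - K * y2 - d * (W - K * V)) (x3 - K * y3 - d * (W - K * V))) /
    - Num.min (x1 - K * y1 - d * (W - K * V))
      (Num.min (x2 - K * y2 - d * (W - K * V)) (x3 - K * y3 - d * (W - K * V)))
  <= (4 + d) / (2 - d).
Proof.
move=> d_range K_gt0 not_same x_sum0 y_sum0 y13 x1_root x2_root x3_root y1_root y2_root y3_root.
rewrite -!addr_maxl -!addr_minl.
have sum0 : (x1 - K * y1) + (x2 - K * y2) + (x3 - K * y3) = 0.
  have -> : (x1 - K * y1) + (x2 - K * y2) + (x3 - K * y3) = (x1 + x2 + x3) - K * (y1 + y2 + y3)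
    by ring.
  by rewrite x_sum0 y_sum0 mulr0 subr0.
have not0 : ~ [/\ x1 - K * y1 = 0, x2 - K * y2 = 0 & x3 - K * y3 = 0].
  move=> [/eqP + _ /eqP]; rewrite !subr_eq0 => /eqP x1E /eqP x3E.
  have [K1 WV] := cubic_roots_scale K_gt0 y13 x1_root x3_root y1_root y3_root x1E x3E.
  by move: not_same; rewrite K1 WV !subrr normr0 addr0 eqxx.
have [Mm mM m_lt0] := max3_min3_sum0 sum0 not0.
apply: (ratio_bounds d_range _ _ Mm mM m_lt0).
  rewrite !le_max (root_diff_ge K x1_root y1_root) (root_diff_ge K x2_root y2_root).
  by rewrite (root_diff_ge K x3_root y3_root) exists_cube_ge.
rewrite !ge_min (root_diff_le K x1_root y1_root) (root_diff_le K x2_root y2_root).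
by rewrite (root_diff_le K x3_root y3_root) exists_cube_le.
Qed.

Lemma cos3 (x : R) : cos (3 * x) = 4 * cos x ^+ 3 - 3 * cos x.
Proof.
have -> : 3 * x = x *+ 2 + x by rewrite mulr2n; ring.
rewrite cosD cos_mulr2n sin_mulr2n.
have -> : (cos x * sin x) *+ 2 * sin x = 2 * cos x * sin x ^+ 2 by ring.
by rewrite sin2cos2; ring.
Qed.

Lemma cos_pi3 : cos (pi / 3) = 2^-1 :> R.
Proof.
have pi_gt0 := @pi_gt0 R.
have cos_gt0 : 0 < cos (pi / 3 : R) by apply: cos_gt0_pihalf; lra.
have := cos3 (pi / 3); rewrite mulrC divfK ?pnatr_eq0 // cospi.
set c := cos _ in cos_gt0 * => cos3c.
have : (c + 1) * (2 * c - 1) ^+ 2 = (4 * c ^+ 3 - 3 * c) - (-1) by ring.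
rewrite -cos3c subrr => /eqP; rewrite mulf_eq0 sqrf_eq0 => /orP[|] /eqP; lra.
Qed.

Lemma cubic_cos (t : R) : let z := 2 / Num.sqrt 3 * cos t in
  z ^+ 3 - z = 2 / (3 * Num.sqrt 3) * cos (3 * t).
Proof.
move=> z; rewrite /z cos3.
have s3_neq0 : Num.sqrt 3 != 0 :> R by rewrite sqrtr_eq0 -ltNge ltr0n.
have -> : (2 / Num.sqrt 3 * cos t) ^+ 3 =
  8 / Num.sqrt 3 * (Num.sqrt 3)^-1 ^+ 2 * cos t ^+ 3 :> R by ring.
by rewrite exprVn sqr_sqrtr ?ler0n //; field.
Qed.

Lemma acos_arg_range (W : R) : 27 * W ^+ 2 <= 1 -> -1 <= 3 * Num.sqrt 3 * W <= 1.
Proof.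
move=> W_range; have : (3 * Num.sqrt 3 * W) ^+ 2 <= 1.
  by rewrite !exprMn sqr_sqrtr ?ler0n //; lra.
move: (3 * _ * W) => t t2_le1; apply/andP; split; nra.
Qed.

Lemma mu_shift (W d : R) :
  [/\ mu1 W d = mu1 W 0 - W * d, mu2 W d = mu2 W 0 - W * d & mu3 W d = mu3 W 0 - W * d].
Proof. by rewrite /mu1 /mu2 /mu3 !mulr0 !subr0. Qed.

Lemma mu_sum0 (W : R) : mu1 W 0 + mu2 W 0 + mu3 W 0 = 0.
Proof.
rewrite /mu1 /mu2 /mu3; move: (acos _) => th.
by rewrite (mulrBl 3^-1 th pi) (mulrDl th pi 3^-1) cosB cosD cos_pi3; field.
Qed.

Lemma mu_roots (W : R) : 27 * W ^+ 2 <= 1 ->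
  [/\ mu1 W 0 ^+ 3 - mu1 W 0 + 2 * W = 0, mu2 W 0 ^+ 3 - mu2 W 0 + 2 * W = 0
    & mu3 W 0 ^+ 3 - mu3 W 0 + 2 * W = 0].
Proof.
move=> /acos_arg_range range.
have s3_neq0 : Num.sqrt 3 != 0 :> R by rewrite sqrtr_eq0 -ltNge ltr0n.
have := acosK range; rewrite /mu1 /mu2 /mu3 !mulr0 !subr0.
move: (acos _) => th cos_th.
have thirdK x : 3 * (x / 3) = x :> R by rewrite mulrC divfK ?pnatr_eq0.
have root t : cos (3 * t) = - (3 * Num.sqrt 3 * W) ->
    (2 / Num.sqrt 3 * cos t) ^+ 3 - 2 / Num.sqrt 3 * cos t + 2 * W = 0.
  by move=> cos3t; rewrite cubic_cos cos3t; field.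
split; [apply: root | apply: root |].
- by rewrite thirdK cosB cospi sinpi cos_th; ring.
- by rewrite thirdK cosD cospi sinpi cos_th; ring.
have cubeN (z : R) : (- z) ^+ 3 - - z = - (z ^+ 3 - z) by ring.
by rewrite mulNr cubeN cubic_cos thirdK cos_th; field.
Qed.

Lemma mu3_lt0_lt_mu1 (W : R) : 27 * W ^+ 2 <= 1 -> mu3 W 0 < 0 < mu1 W 0.
Proof.
move=> /acos_arg_range range.
have := acos_ge0 range; have := acos_lepi range.
rewrite /mu1 /mu3 !mulr0 !subr0; move: (acos _) => th th_le_pi th_ge0.
have pi_gt0 := @pi_gt0 R.
have r_gt0 : 0 < 2 / Num.sqrt 3 :> R by rewrite divr_gt0 ?sqrtr_gt0 ?ltr0n.
rewrite mulNr oppr_lt0 !pmulr_rgt0 //; apply/andP; split; apply: cos_gt0_pihalf; lra.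
Qed.

End Real.

Section Octonions.
Variable R : realType.

Lemma fano_coefE a b c : fano_coef R a b c = (fano_coefz a b c)%:~R.
Proof.
rewrite /fano_coef /fano_coefz sumrB rmorphB /= -!natr_sum.
suff countE x y z : (\sum_(s < 7) cyc_match s x y z)%N =
    count (fun s => cyc_match s x y z) (iota 0 7) by rewrite !countE.
rewrite -sum1_count [RHS]big_mkcond -(big_mkord xpredT (fun s => (cyc_match s x y z : nat))).
by rewrite /index_iota subn0; apply: eq_bigr => s _; case: cyc_match.
Qed.

Lemma oct_coefE (i j k : 'I_8) : oct_coef R i j k = (oct_coefz i j k)%:~R.
Proof.
rewrite /oct_coef /oct_coefz fano_coefE.
rewrite -[j == k]/(j == k :> nat) -[i == k]/(i == k :> nat) -[i == j]/(i == j :> nat).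
case: (i == 0 :> nat); first by case: (j == k :> nat).
case: (j == 0 :> nat); first by case: (i == k :> nat).
case: (i == j :> nat); first by rewrite rmorphN; case: (k == 0 :> nat).
by case: (k == 0 :> nat).
Qed.

Lemma big_ord8_inord (F : 'I_8 -> R) : \sum_(i < 8) F i = \sum_(0 <= n < 8) F (inord n).
Proof. by rewrite big_mkord; apply: eq_bigr => i _; rewrite inord_val. Qed.

Lemma omul_inord (x y : 'rV[R]_8) k : (k < 8)%N -> omul x y 0 (inord k) =
  \sum_(0 <= i < 8) \sum_(0 <= j < 8) x 0 (inord i) * y 0 (inord j) * (oct_coefz i j k)%:~R.
Proof.
move=> lt_k8; rewrite mxE big_ord8_inord; apply: eq_big_nat => i /andP[_ lt_i8].
rewrite big_ord8_inord; apply: eq_big_nat => j /andP[_ lt_j8].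
by rewrite oct_coefE !inordK.
Qed.

Lemma sqnorm_omul (x y : 'rV[R]_8) : sqnorm (omul x y) = sqnorm x * sqnorm y.
Proof.
(* Unrolled, this is Degen's eight-square identity, which ring checks. *)
rewrite /sqnorm !big_ord8_inord unlock /= !omul_inord // unlock /=.
by eval_oct_coefz; ring.
Qed.

Lemma sqnorm_ge0 n (v : 'rV[R]_n) : 0 <= sqnorm v.
Proof. by apply: sumr_ge0 => i _; apply: sqr_ge0. Qed.

Lemma sqr_coord_le_sqnorm n (v : 'rV[R]_n) i : v 0 i ^+ 2 <= sqnorm v.
Proof. by rewrite /sqnorm (bigD1 i) //= lerDl sumr_ge0 // => j _; apply: sqr_ge0. Qed.

Lemma sqnorm_blk (v : 'rV[R]_24) :
  sqnorm v = sqnorm (blk v 0) + sqnorm (blk v 1) + sqnorm (blk v 2).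
Proof.
rewrite /sqnorm; change 24%N with (8 + (8 + 8))%N.
rewrite !big_split_ord /= addrA.
congr (_ + _ + _); apply: eq_bigr => i _; rewrite mxE; congr (v 0 _ ^+ 2);
  apply: val_inj; rewrite /= inordK //; have := ltn_ord i; lia.
Qed.

Lemma P_sqr_le (v : 'rV[R]_24) : sqnorm v = 1 -> 27 * P v ^+ 2 <= 1.
Proof.
move=> v_unit; rewrite /P /ore.
have := sqr_coord_le_sqnorm (omul (omul (blk v 0) (blk v 1)) (blk v 2)) 0.
have := AGM3 (sqnorm_ge0 (blk v 0)) (sqnorm_ge0 (blk v 1)) (sqnorm_ge0 (blk v 2)).
rewrite !sqnorm_omul -sqnorm_blk v_unit expr1n => agm coord.
by apply: le_trans agm; rewrite ler_pM2l.
Qed.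

End Octonions.

Theorem lemma4p1 (R : realType) (H : 'M[R]_24) (a b : 'rV[R]_24) (d K : R) :
  \rank H = 21%N ->
  (a <= H)%MS -> sqnorm a = 1 ->
  (b <= H)%MS -> sqnorm b = 1 ->
  1 <= d < 2 -> 0 < K ->
  `|K - 1| + `|P b - P a| != 0 ->
  (2 - d) / (4 + d) <= mu_plus (P a) (P b) d K / (- mu_minus (P a) (P b) d K)
  <= (4 + d) / (2 - d).
Proof.
move=> _ _ a_unit _ b_unit d_range K_gt0 not_same.
have W_range := P_sqr_le a_unit; have V_range := P_sqr_le b_unit.
have [x1_root x2_root x3_root] := mu_roots W_range.
have [y1_root y2_root y3_root] := mu_roots V_range.
have /andP[y3_lt0 y1_gt0] := mu3_lt0_lt_mu1 V_range.
rewrite /mu_plus /mu_minus; case: (mu_shift (P a) d) (mu_shift (P b) d) => -> -> -> [-> -> ->].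
have shiftE x y : x - P a * d - K * (y - P b * d) = x - K * y - d * (P a - K * P b) by ring.
rewrite !shiftE.
exact: (roots_ratio_bounds d_range K_gt0 not_same (mu_sum0 _) (mu_sum0 _)
  (negbT (gt_eqF (lt_trans y3_lt0 y1_gt0))) x1_root x2_root x3_root y1_root y2_root y3_root).
Qed.
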